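(* Let $\mathcal{R}=(G_0,e\to R)$ be an expanding replacement system with limit space $X$. Then the set of all rearrangements of $X$ is a group under composition.
   Context: A graph means a finite directed multigraph (loops and multiple edges allowed). A replacement system $\mathcal{R}=(G_0,e\to R)$ consists of a graph $G_0$ (the base graph) and a replacement rule $e\to R$, where $e$ is a single non-loop directed edge from a vertex $v$ to a vertex $w$, and $R$ is a graph containing $v$ and $w$ (the initial and terminal vertices of $R$; the other vertices of $R$ are interior). Replacing an edge $\varepsilon$ of a graph $G$ means deleting $\varepsilon$ and gluing in a copy of $R$, identifying the initial (resp. terminal) vertex of $R$ with the initial (resp. terminal) vertex of $\varepsilon$; the new edges are named $\varepsilon\zeta$ for edges $\zeta$ of $R$. The full expansion sequence is $G_0,G_1,\dots$, where $G_n$ is obtained from $G_{n-1}$ by replacing every edge; thus the edges of $G_n$ are the words $\varepsilon_0\varepsilon_1\cdots\varepsilon_n$ with $\varepsilon_0$ an edge of $G_0$ and $\varepsilon_i$ edges of $R$. $\mathcal{R}$ is expanding if (i) neither $G_0$ nor $R$ has isolated vertices, (ii) the initial and terminal vertices of $R$ are not joined by an edge, (iii) $R$ has at least three vertices and two edges. The symbol space is $\Omega=E(G_0)\times E(R)^{\mathbb{N}}$ with the product topology; two sequences $\varepsilon_0\varepsilon_1\cdots$ and $\varepsilon_0'\varepsilon_1'\cdots$ are glued if for every $n$ the edges $\varepsilon_0\cdots\varepsilon_n$ and $\varepsilon_0'\cdots\varepsilon_n'$ of $G_n$ share at least one vertex; for expanding systems this is an equivalence relation $\sim$ and the limit space is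 $X=\Omega/\sim$. For an edge $e'=\varepsilon_0\cdots\varepsilon_n$ of $G_n$, the cell $C(e')$ is the image in $X$ of the set of sequences with prefix $e'$; its boundary points are the images of the endpoints of $e'$ (a vertex $u$ of some $G_n$ corresponds to the point of $X$ that is the image of any sequence $\varepsilon_0\varepsilon_1\cdots$ such that $\varepsilon_0\cdots\varepsilon_k$ is incident on $u$ for all large $k$), and its interior is the cell minus its boundary points. If $e',e''$ are both loops or both non-loops, the canonical homeomorphism $C(e')\to C(e'')$ is the map induced by $e'\zeta_1\zeta_2\cdots\mapsto e''\zeta_1\zeta_2\cdots$. A cellular partition of $X$ is a cover of $X$ by finitely many cells with pairwise disjoint interiors. A rearrangement of $X$ is a homeomorphism $f\colon X\to X$ such that for some cellular partition $\mathcal{P}$, $f$ restricts to a canonical homeomorphism on each cell of $\mathcal{P}$. *)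

From mathcomp Require Import all_boot.
Set Implicit Arguments. Unset Strict Implicit. Unset Printing Implicit Defensive.

Record graph := Graph {
  gV : finType;
  gE : finType;
  gsrc : gE -> gV;
  gtgt : gE -> gV }.

(* A replacement system (G0, e -> R): base graph G0, replacement graph R with
   initial vertex rinit and terminal vertex rterm (the endpoints of e). *)
Record repl_sys := ReplSys {
  G0 : graph;
  RG : graph;
  rinit : gV RG;
  rterm : gV RG }.

Definition no_isolated (G : graph) : Prop :=
  forall v : gV G, exists z : gE G, gsrc z = v \/ gtgt z = v.

Definition expanding (RS : repl_sys) : Prop :=
  [/\ no_isolated (G0 RS) /\ no_isolated (RG RS),
      rinit RS <> rterm RS,
      (forall z : gE (RG RS),
         ~ (gsrc z = rinit RS /\ gtgt z = rterm RS) /\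
         ~ (gsrc z = rterm RS /\ gtgt z = rinit RS)),
      2 < #|gV (RG RS)| & 1 < #|gE (RG RS)| ].

Section Limit.
Variable RS : repl_sys.

Notation E0 := (gE (G0 RS)).
Notation ER := (gE (RG RS)).
Notation VR := (gV (RG RS)).

(* Vertices of all the G_n: base vertices, or an interior vertex u of the copy of
   R glued in when replacing the edge (e0, p) = e0 p_1 ... p_k of G_k. *)
Inductive vtx : Type :=
  | VBase of gV (G0 RS)
  | VInt of E0 & seq ER & VR.

(* Edges of G_n: words e0 e1 ... en, represented as (e0, [:: e1; ...; en]). *)
Definition edge : Type := (E0 * seq ER)%type.

Definition vmap (e0 : E0) (p : seq ER) (st : vtx * vtx) (u : VR) : vtx :=
  if u == rinit RS then st.1 else if u == rterm RS then st.2 else VInt e0 p u.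

Fixpoint ends_aux (e0 : E0) (pre : seq ER) (st : vtx * vtx) (s : seq ER)
  : vtx * vtx :=
  match s with
  | [::] => st
  | z :: s' => ends_aux e0 (rcons pre z)
                 (vmap e0 pre st (gsrc z), vmap e0 pre st (gtgt z)) s'
  end.

(* (initial vertex, terminal vertex) of the edge (e0, s) of G_(size s). *)
Definition ends (e : edge) : vtx * vtx :=
  ends_aux e.1 [::] (VBase (gsrc e.1), VBase (gtgt e.1)) e.2.

Definition Omega : Type := (E0 * (nat -> ER))%type.

Definition prefix (w : Omega) (n : nat) : edge := (w.1, mkseq w.2 n).

Definition share (a b : vtx * vtx) : Prop :=
  a.1 = b.1 \/ a.1 = b.2 \/ a.2 = b.1 \/ a.2 = b.2.

Definition glued (w w' : Omega) : Prop :=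
  forall n, share (ends (prefix w n)) (ends (prefix w' n)).

(* limit space X = Omega / glued (glued is an equivalence relation for
   expanding systems); points are the equivalence classes. *)
Definition X : Type := {A : Omega -> Prop | exists w, A = glued w}.

Definition proj (w : Omega) : X := exist _ (glued w) (ex_intro _ w erefl).

(* product topology on Omega (all factors finite discrete) *)
Definition open_Omega (S : Omega -> Prop) : Prop :=
  forall w, S w -> exists n, forall w', w'.1 = w.1 ->
    (forall i, i < n -> w'.2 i = w.2 i) -> S w'.

Definition open_X (U : X -> Prop) : Prop := open_Omega (fun w => U (proj w)).

Definition continuous_X (f : X -> X) : Prop :=
  forall U, open_X U -> open_X (fun x => U (f x)).

Definition homeomorphism_X (f : X -> X) : Prop :=
  exists g : X -> X, [/\ cancel f g, cancel g f, continuous_X f & continuous_X g].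

Definition ext (e : edge) (zeta : nat -> ER) : Omega :=
  (e.1, fun i => if i < size e.2 then nth (zeta 0) e.2 i else zeta (i - size e.2)).

Definition cell (e : edge) (x : X) : Prop := exists zeta, x = proj (ext e zeta).

Definition incident (u : vtx) (st : vtx * vtx) : Prop := u = st.1 \/ u = st.2.

Definition vertex_point (u : vtx) (x : X) : Prop :=
  exists w, x = proj w /\
    exists N, forall k, N <= k -> incident u (ends (prefix w k)).

Definition cell_boundary (e : edge) (x : X) : Prop :=
  vertex_point (ends e).1 x \/ vertex_point (ends e).2 x.

Definition cell_interior (e : edge) (x : X) : Prop :=
  cell e x /\ ~ cell_boundary e x.

Definition is_loop (e : edge) : Prop := (ends e).1 = (ends e).2.

Definition cellular_partition (P : seq edge) : Prop :=
  [/\ uniq P,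
      (forall x, exists2 e, e \in P & cell e x) &
      (forall e e', e \in P -> e' \in P -> e <> e' ->
         forall x, ~ (cell_interior e x /\ cell_interior e' x))].

Definition rearrangement (f : X -> X) : Prop :=
  homeomorphism_X f /\
  exists P, cellular_partition P /\
    forall e, e \in P -> exists e' : edge,
      (is_loop e <-> is_loop e') /\
      forall zeta, f (proj (ext e zeta)) = proj (ext e' zeta).

End Limit.

From Pilot Require Import Defs.
From mathcomp Require Import all_boot.
From Stdlib Require Import Classical FunctionalExtensionality ProofIrrelevance.
From mathcomp Require Import zify.

(* Cells meet only at boundary points: two sequences representing the same point
   and separating before level D are eventually joined at a vertex of level at most
   D, so a point of a cell also represented outside it is a boundary point.
   Moreover, whether an end of a subcell is an end of the cell depends only on the
   word leading to the subcell and on whether the cell is a loop; so canonical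
   homeomorphisms map boundaries to boundaries and restrict to subcells. The images of the cells of a
   partition for f form one for its inverse. For f \o g, refine the partition of g
   so deeply that g maps each of its cells into a cell of the partition of f; this
   works because a cellular partition contains a prefix of every sequence, since a
   deep cell whose ends are both new vertices lies inside one cell of it. *)

Set Implicit Arguments. Unset Strict Implicit. Unset Printing Implicit Defensive.

Section Rearrangements.
Variable RS : repl_sys.

Local Notation E0 := (gE (G0 RS)).
Local Notation ER := (gE (RG RS)).
Local Notation VR := (gV (RG RS)).
Local Notation V := (vtx RS).
Local Notation ri := (rinit RS).
Local Notation rt := (rterm RS).
Local Notation pfx := (@Defs.prefix RS).

(* The least n such that the vertex is a vertex of G_n. *)
Definition vtx_level (u : V) : nat :=
  match u with VBase _ => 0 | VInt _ p _ => (size p).+1 end.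

Definition ecat (e : edge RS) (t : seq ER) : edge RS := (e.1, e.2 ++ t).

Lemma ends_aux_rcons (e0 : E0) (s : seq ER) (z : ER) pre st :
  ends_aux e0 pre st (rcons s z) =
  (vmap e0 (pre ++ s) (ends_aux e0 pre st s) (gsrc z),
   vmap e0 (pre ++ s) (ends_aux e0 pre st s) (gtgt z)).
Proof.
elim: s pre st => [|y s IH] pre st /=; first by rewrite cats0.
by rewrite IH cat_rcons.
Qed.

Lemma ends_rcons (e0 : E0) (s : seq ER) (z : ER) :
  ends ((e0, rcons s z) : edge RS) =
  (vmap e0 s (ends ((e0, s) : edge RS)) (gsrc z),
   vmap e0 s (ends ((e0, s) : edge RS)) (gtgt z)).
Proof. by rewrite /ends /= ends_aux_rcons. Qed.

Lemma vmap_cases (e0 : E0) (s : seq ER) (st : V * V) (r : VR) :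
  [\/ vmap e0 s st r = st.1, vmap e0 s st r = st.2 | vmap e0 s st r = VInt e0 s r].
Proof.
rewrite /vmap; case: ifP => _; first exact: Or31.
by case: ifP => _; [apply: Or32 | apply: Or33].
Qed.

Definition lineage_vertex (e0 : E0) (s : seq ER) (u : V) : Prop :=
  [\/ u = VBase (gsrc e0), u = VBase (gtgt e0) |
      exists2 j, j < size s & exists r, u = VInt e0 (take j s) r].

Lemma incident_lineage (e0 : E0) (s : seq ER) (u : V) :
  incident u (ends ((e0, s) : edge RS)) -> lineage_vertex e0 s u.
Proof.
elim/last_ind: s u => [|s z IH] u.
  by case=> ->; [apply: Or31 | apply: Or32].
have old v : incident v (ends ((e0, s) : edge RS)) -> lineage_vertex e0 (rcons s z) v.
  case/IH => [->|->|[j hj [r ->]]]; [exact: Or31 | exact: Or32 |].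
  apply: Or33; exists j; first by rewrite size_rcons ltnS ltnW.
  by exists r; rewrite -cats1 takel_cat // ltnW.
have new r : lineage_vertex e0 (rcons s z) (VInt e0 s r).
  by apply: Or33; exists (size s); [rewrite size_rcons | exists r; rewrite -cats1 take_size_cat].
rewrite ends_rcons /incident /=.
by case=> ->; [case: (vmap_cases e0 s (ends (e0, s)) (gsrc z))
              | case: (vmap_cases e0 s (ends (e0, s)) (gtgt z))]
   => ->; (apply: old; rewrite /incident; tauto) || exact: new.
Qed.

Lemma vtx_level_incident (e : edge RS) u :
  incident u (ends e) -> vtx_level u <= size e.2.
Proof.
case: e => e0 s /incident_lineage [->|->|[j hj [r ->]]] //=.
by rewrite size_take hj.
Qed.

Lemma vtx_level_init (e : edge RS) : vtx_level (ends e).1 <= size e.2.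
Proof. by apply: vtx_level_incident; left. Qed.

Lemma vtx_level_term (e : edge RS) : vtx_level (ends e).2 <= size e.2.
Proof. by apply: vtx_level_incident; right. Qed.

Lemma vmap_eq_cases (e0 : E0) (s : seq ER) (st : V * V) (x y : VR) :
  vtx_level st.1 <= size s -> vtx_level st.2 <= size s ->
  vmap e0 s st x = vmap e0 s st y ->
  [\/ x = y, x = ri /\ y = rt | x = rt /\ y = ri].
Proof.
move=> h1 h2; rewrite /vmap.
case: (x =P ri) => [->|hx1]; case: (y =P ri) => [->|hy1]; try by move=> _; apply: Or31.
- case: (y =P rt) => [->|hy2]; first by move=> _; apply: Or32.
  by move=> E; move: h1; rewrite E /= ltnn.
- case: (x =P rt) => [->|hx2]; first by move=> _; apply: Or33.
  by move=> E; move: h1; rewrite -E /= ltnn.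
- case: (x =P rt) => [->|hx2]; case: (y =P rt) => [->|hy2]; try by move=> _; apply: Or31.
  + by move=> E; move: h2; rewrite E /= ltnn.
  + by move=> E; move: h2; rewrite -E /= ltnn.
  + by case=> ->; apply: Or31.
Qed.

Lemma vmap_level_le (e0 : E0) (s : seq ER) (st : V * V) (r : VR) :
  vtx_level (vmap e0 s st r) <= size s -> r = ri \/ r = rt.
Proof.
rewrite /vmap; case: (r =P ri) => [->|_]; first by left.
case: (r =P rt) => [->|_]; first by right.
by rewrite /= ltnn.
Qed.

Hypothesis expandingRS : expanding RS.

Lemma no_edge_init_term (z : ER) :
  ~ (gsrc z = ri /\ gtgt z = rt) /\ ~ (gsrc z = rt /\ gtgt z = ri).
Proof. by case: expandingRS => _ _ H _ _; apply: H. Qed.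

Lemma is_loop_rcons (e0 : E0) (s : seq ER) (z : ER) :
  is_loop ((e0, rcons s z) : edge RS) <-> gsrc z = gtgt z.
Proof.
rewrite /is_loop ends_rcons /=; split; last by move=> ->.
move/vmap_eq_cases; rewrite !vtx_level_init !vtx_level_term => /(_ isT isT).
by have := no_edge_init_term z; case=> n1 n2 [|//|]; tauto.
Qed.

(* Otherwise one end of the edge z of R would be [ri] and the other [rt]. *)
Lemma ends_rcons_level_le (e0 : E0) (s : seq ER) (z : ER) :
  let c := ends ((e0, rcons s z) : edge RS) in
  vtx_level c.1 <= size s -> vtx_level c.2 <= size s -> c.1 = c.2.
Proof.
rewrite /= ends_rcons /= => /vmap_level_le h1 /vmap_level_le h2.
have [n1 n2] := no_edge_init_term z.
by case: h1 => a1; case: h2 => a2; rewrite a1 a2 //; tauto.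
Qed.

Inductive end_tag := TInit | TTerm | TFresh.

Definition tag_step (t : end_tag * end_tag) (u : VR) : end_tag :=
  if u == ri then t.1 else if u == rt then t.2 else TFresh.

(* Whether each end of the edge [ecat e tau] is the initial vertex of e, its
   terminal vertex, or a vertex created below e: this depends on tau only. *)
Definition word_tags (tau : seq ER) : end_tag * end_tag :=
  foldl (fun t z => (tag_step t (gsrc z), tag_step t (gtgt z))) (TInit, TTerm) tau.

Definition tag_sem (e : edge RS) (t : end_tag) (u : V) : Prop :=
  match t with
  | TInit => u = (ends e).1
  | TTerm => u = (ends e).2
  | TFresh => size e.2 < vtx_level u
  end.

Lemma tag_sem_step (e : edge RS) (tau : seq ER) (t : end_tag * end_tag) (st : V * V) r :
  tag_sem e t.1 st.1 -> tag_sem e t.2 st.2 ->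
  tag_sem e (tag_step t r) (vmap e.1 (e.2 ++ tau) st r).
Proof.
move=> h1 h2; rewrite /tag_step /vmap.
case: (r == ri) => //; case: (r == rt) => //=.
by rewrite size_cat ltnS leq_addr.
Qed.

Lemma tag_sem_ends_cat (e : edge RS) (tau : seq ER) :
  tag_sem e (word_tags tau).1 (ends (ecat e tau)).1 /\
  tag_sem e (word_tags tau).2 (ends (ecat e tau)).2.
Proof.
elim/last_ind: tau => [|tau z [IH1 IH2]].
  by case: e => e0 s; rewrite /ecat /= cats0.
rewrite /word_tags foldl_rcons -/(word_tags tau) /ecat -rcons_cat ends_rcons /=.
by split; apply: tag_sem_step.
Qed.

Definition init_tag (L : Prop) (t : end_tag) : Prop := t = TInit \/ (L /\ t = TTerm).
Definition term_tag (L : Prop) (t : end_tag) : Prop := t = TTerm \/ (L /\ t = TInit).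

Lemma init_eq_tag (e : edge RS) t c :
  tag_sem e t c -> ((ends e).1 = c <-> init_tag (is_loop e) t).
Proof.
rewrite /init_tag /is_loop; case: t => /= [->|->|h].
- by split; auto.
- by split; [move=> ->; right | case=> [//|[]]].
- split=> [E|]; last by case=> [//|[_ //]].
  by move: h; rewrite -E ltnNge vtx_level_init.
Qed.

Lemma term_eq_tag (e : edge RS) t c :
  tag_sem e t c -> ((ends e).2 = c <-> term_tag (is_loop e) t).
Proof.
rewrite /term_tag /is_loop; case: t => /= [->|->|h].
- by split; [move=> <-; right | case=> [//|[]]].
- by split; auto.
- split=> [E|]; last by case=> [//|[_ //]].
  by move: h; rewrite -E ltnNge vtx_level_term.
Qed.

Lemma incident_init_cat (e : edge RS) (tau : seq ER) :
  incident (ends e).1 (ends (ecat e tau)) <->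
  init_tag (is_loop e) (word_tags tau).1 \/ init_tag (is_loop e) (word_tags tau).2.
Proof.
have [h1 h2] := tag_sem_ends_cat e tau.
by rewrite /incident -(init_eq_tag h1) -(init_eq_tag h2); split; case; auto.
Qed.

Lemma incident_term_cat (e : edge RS) (tau : seq ER) :
  incident (ends e).2 (ends (ecat e tau)) <->
  term_tag (is_loop e) (word_tags tau).1 \/ term_tag (is_loop e) (word_tags tau).2.
Proof.
have [h1 h2] := tag_sem_ends_cat e tau.
by rewrite /incident -(term_eq_tag h1) -(term_eq_tag h2); split; case; auto.
Qed.

Lemma incident_ends_cat_transport (a b : edge RS) (tau : seq ER) :
  (is_loop a <-> is_loop b) ->
  (incident (ends a).1 (ends (ecat a tau)) -> incident (ends b).1 (ends (ecat b tau))) /\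
  (incident (ends a).2 (ends (ecat a tau)) -> incident (ends b).2 (ends (ecat b tau))).
Proof.
move=> hL; rewrite !incident_init_cat !incident_term_cat /init_tag /term_tag.
by split; case: (word_tags tau) => t1 t2 /=; tauto.
Qed.

Lemma is_loop_cat_transport (a b : edge RS) (tau : seq ER) :
  (is_loop a <-> is_loop b) -> (is_loop (ecat a tau) <-> is_loop (ecat b tau)).
Proof.
case/lastP: tau => [|tau z].
  by case: a => ? ?; case: b => ? ?; rewrite /ecat /= !cats0.
by move=> _; rewrite /ecat -!rcons_cat !is_loop_rcons.
Qed.

Definition scat (s : seq ER) (z : nat -> ER) : nat -> ER :=
  fun i => if i < size s then nth (z 0) s i else z (i - size s).

Definition agree_upto (v w : Omega RS) (d : nat) : Prop :=
  v.1 = w.1 /\ forall i, i < d -> v.2 i = w.2 i.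

Lemma mkseq_scat (s : seq ER) z m : mkseq (scat s z) (size s + m) = s ++ mkseq z m.
Proof.
elim: m => [|m IH].
  rewrite addn0 cats0; apply: (@eq_from_nth _ (z 0)); rewrite ?size_mkseq // => i hi.
  by rewrite nth_mkseq // /scat hi.
rewrite addnS !mkseqS IH rcons_cat /scat.
have -> : (size s + m < size s) = false by lia.
by rewrite addKn.
Qed.

Lemma prefix_ext (e : edge RS) z m :
  pfx (ext e z) (size e.2 + m) = ecat e (mkseq z m).
Proof. by rewrite /Defs.prefix /= mkseq_scat. Qed.

Lemma prefix_ext_size (e : edge RS) z : pfx (ext e z) (size e.2) = e.
Proof. by have := prefix_ext e z 0; rewrite addn0 /ecat cats0; case: e. Qed.

Lemma ext_ecat (e : edge RS) t z : ext (ecat e t) z = ext e (scat t z).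
Proof.
rewrite /ext /=; congr pair; apply: functional_extensionality => i.
rewrite /scat size_cat nth_cat.
case: (ltnP i (size e.2)) => h1.
  have -> : i < size e.2 + size t by lia.
  exact: set_nth_default.
have -> : (i - size e.2 < size t) = (i < size e.2 + size t) by lia.
by case: ifP => // _; rewrite subnDA.
Qed.

Lemma ext_split (e : edge RS) z K :
  ext e z = ext (ecat e (mkseq z K)) (fun i => z (i + K)).
Proof.
rewrite ext_ecat; congr ext; apply: functional_extensionality => i.
rewrite /scat size_mkseq; case: ifP => h; first by rewrite nth_mkseq.
by rewrite subnK //; lia.
Qed.

Lemma ext_nil (w : Omega RS) : ext (w.1, [::]) w.2 = w.
Proof.
case: w => a f; rewrite /ext /=; congr pair; apply: functional_extensionality => i.
by rewrite subn0.
Qed.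

Lemma take_mkseq (f : nat -> ER) j k : j <= k -> take j (mkseq f k) = mkseq f j.
Proof.
move=> hjk; apply: (@eq_from_nth _ (f 0)); rewrite ?size_takel ?size_mkseq //.
by move=> i hi; rewrite nth_take // !nth_mkseq //; lia.
Qed.

Lemma prefix_ext_le (e : edge RS) z j :
  j <= size e.2 -> pfx (ext e z) j = (e.1, take j e.2).
Proof.
move=> hj; have := congr1 snd (prefix_ext_size e z); rewrite /Defs.prefix /= => E.
by congr pair; rewrite -[in RHS]E take_mkseq.
Qed.

Lemma prefix_agree v w d : agree_upto v w d -> pfx v d = pfx w d.
Proof.
case=> h1 h2; rewrite /Defs.prefix h1; congr pair.
apply: (@eq_from_nth _ (w.2 0)); rewrite ?size_mkseq // => i hi.
by rewrite !nth_mkseq // h2.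
Qed.

Lemma prefixS (v : Omega RS) k : pfx v k.+1 = (v.1, rcons (mkseq v.2 k) (v.2 k)).
Proof. by rewrite /Defs.prefix mkseqS. Qed.

Lemma size_prefix (v : Omega RS) k : size (pfx v k).2 = k.
Proof. by rewrite size_mkseq. Qed.

Lemma incident_prefix_VInt (v : Omega RS) k e0 p r :
  incident (VInt e0 p r) (ends (pfx v k)) ->
  [/\ e0 = v.1, size p < k & p = mkseq v.2 (size p)].
Proof.
case/incident_lineage=> [//|//|[j hj [r' [-> -> _]]]].
rewrite size_mkseq in hj.
by rewrite take_mkseq ?size_mkseq //; lia.
Qed.

(* An interior vertex records the word below which it was created. *)
Lemma incident_common_agree (v w : Omega RS) k u m :
  incident u (ends (pfx v k)) -> incident u (ends (pfx w k)) ->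
  m < vtx_level u -> agree_upto v w m.
Proof.
case: u => [b|e0 p r] hv hw //= hm.
have [h1 h2 h3] := incident_prefix_VInt hv.
have [h1' h2' h3'] := incident_prefix_VInt hw.
split; first by rewrite -h1 h1'.
move=> i hi; have hip : i < size p by lia.
by rewrite -(nth_mkseq (v.2 0) v.2 hip) -h3 h3' nth_mkseq.
Qed.

(* The ends of a child edge are ends of its parent or newly created vertices. *)
Lemma incident_prefix_le (v : Omega RS) u j k :
  incident u (ends (pfx v k)) -> vtx_level u <= j -> j <= k ->
  incident u (ends (pfx v j)).
Proof.
elim: k => [|k IH] hi hl hjk; first by have -> : j = 0 by lia.
case: (ltnP j k.+1) => hj; last by have -> : j = k.+1 by lia.
apply: (IH _ hl); last by lia.
move: hi; rewrite prefixS ends_rcons /incident /= -/(pfx v k) /Defs.prefix.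
set st := ends _.
have old r : u = vmap v.1 (mkseq v.2 k) st r -> u = st.1 \/ u = st.2.
  case: (vmap_cases v.1 (mkseq v.2 k) st r) => ->; auto.
  by move=> E; move: hl; rewrite E /= size_mkseq; lia.
by case=> /old.
Qed.

Lemma proj_eq_glued (w w' : Omega RS) : proj w = proj w' -> glued w w'.
Proof.
move=> E; have -> : glued w = glued w' by move: (f_equal (@proj1_sig _ _) E).
by move=> n; left.
Qed.

Lemma proj_surj (x : X RS) : exists w, x = proj w.
Proof.
case: x => A HA; have [w E] := HA; subst A.
by exists w; rewrite /proj; congr exist; apply: proof_irrelevance.
Qed.

Lemma share_incident (A B : V * V) : share A B -> exists u, incident u A /\ incident u B.
Proof. by rewrite /share /incident; case: A B => a1 a2 [b1 b2] /=; firstorder. Qed.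

Definition common_incident (v w : Omega RS) (u : V) (k : nat) : Prop :=
  incident u (ends (pfx v k)) /\ incident u (ends (pfx w k)).

(* For k >= D a vertex shared by the k-th prefixes has level <= D, hence is an end
   of the D-th prefix; one of these two ends is shared infinitely often, hence
   always from D on. *)
Lemma glued_common_vertex (v w : Omega RS) D : glued v w -> ~ agree_upto v w D ->
  exists u, vtx_level u <= D /\ forall k, D <= k -> common_incident v w u k.
Proof.
move=> hg hna.
set a := (ends (pfx v D)).1; set b := (ends (pfx v D)).2.
have la : vtx_level a <= D by have := vtx_level_init (pfx v D); rewrite size_prefix.
have lb : vtx_level b <= D by have := vtx_level_term (pfx v D); rewrite size_prefix.
have ab k : D <= k -> common_incident v w a k \/ common_incident v w b k.
  move=> hk; have [u [hu1 hu2]] := share_incident (hg k).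
  have hl : vtx_level u <= D.
    by rewrite leqNgt; apply/negP => h; apply: hna; apply: incident_common_agree hu1 hu2 h.
  by have := incident_prefix_le hu1 hl hk; case=> E; subst u; [left | right].
have down c k k' : vtx_level c <= D -> D <= k -> k <= k' ->
    common_incident v w c k' -> common_incident v w c k.
  by move=> hc hk hkk' [h1 h2]; split; apply: (incident_prefix_le _ _ hkk') => //; lia.
case: (classic (forall N, exists k, N <= k /\ common_incident v w a k)) => [hinf|hfin].
  exists a; split=> // k hk; have [k' [hk' hb]] := hinf k.
  exact: (down a k k' la hk hk' hb).
have [N hN] : exists N, forall k, N <= k -> ~ common_incident v w a k.
  apply: NNPP => hne; apply: hfin => N; apply: NNPP => hne2; apply: hne; exists N.
  by move=> k hk hb; apply: hne2; exists k.
exists b; split=> // k hk.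
apply: (down b k (maxn k N) lb hk); first by lia.
by case: (ab (maxn k N) ltac:(lia)) => // hb; case: (hN (maxn k N)) => //; lia.
Qed.

Lemma glued_incident_stable (v w : Omega RS) u N : glued v w ->
  (forall k, N <= k -> incident u (ends (pfx w k))) ->
  exists N', forall k, N' <= k -> incident u (ends (pfx v k)).
Proof.
move=> hg hw.
case: (classic (forall D, agree_upto v w D)) => [hall|].
  by exists N => k hk; rewrite (prefix_agree (hall k)); apply: hw.
move=> /not_all_ex_not [D hD].
have [u' [hl' hb]] := glued_common_vertex hg hD.
case: (classic (u' = u)) => [<-|hne].
  by exists D => k hk; case: (hb k hk).
exfalso; set k := maxn N D.
have hu : incident u (ends (pfx w k.+1)) by apply: hw; lia.
have hu' : incident u' (ends (pfx w k.+1)) by case: (hb k.+1) => //; lia.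
have hlu : vtx_level u <= k.
  by have := vtx_level_incident (hw N (leqnn N)); rewrite size_prefix; lia.
move: hu hu'; rewrite prefixS.
have := @ends_rcons_level_le w.1 (mkseq w.2 k) (w.2 k).
rewrite /= size_mkseq /incident.
case: (ends _) => c1 c2 /= H [E1|E1] [E2|E2]; subst; try by apply: hne.
all: apply: hne; rewrite H //; lia.
Qed.

Lemma cell_boundary_of_incident (e : edge RS) z u N :
  (forall k, N <= k -> incident u (ends (pfx (ext e z) k))) ->
  vtx_level u <= size e.2 -> cell_boundary e (proj (ext e z)).
Proof.
move=> hi hl.
have h0 : incident u (ends e).
  rewrite -(prefix_ext_size e z).
  by apply: (incident_prefix_le (hi (maxn N (size e.2)) _)) => //; lia.
have vp : vertex_point u (proj (ext e z)) by exists (ext e z); split => //; exists N.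
by rewrite /cell_boundary; case: h0 => <-; [left | right].
Qed.

Lemma glued_disagree_boundary (a b : edge RS) z z' D :
  proj (ext a z) = proj (ext b z') -> ~ agree_upto (ext a z) (ext b z') D ->
  D <= size a.2 -> cell_boundary a (proj (ext a z)).
Proof.
move=> E hna hD.
have [u [hl hb]] := glued_common_vertex (proj_eq_glued E) hna.
apply: (@cell_boundary_of_incident a z u D); last by lia.
by move=> k hk; case: (hb k hk).
Qed.

Lemma vertex_point_ext (e : edge RS) z u :
  vertex_point u (proj (ext e z)) ->
  exists N, forall k, N <= k -> incident u (ends (pfx (ext e z) k)).
Proof. by case=> w [E [N hN]]; apply: (glued_incident_stable (proj_eq_glued E) hN). Qed.

Lemma cell_boundary_cat (a : edge RS) t z :
  cell_boundary a (proj (ext (ecat a t) z)) ->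
  cell_boundary (ecat a t) (proj (ext (ecat a t) z)).
Proof.
move=> hb.
have [u [hl hvp]] : exists u, vtx_level u <= size a.2 /\
    vertex_point u (proj (ext (ecat a t) z)).
  by case: hb => h; [exists (ends a).1 | exists (ends a).2];
    split => //; [apply: vtx_level_init | apply: vtx_level_term].
have [N hN] := vertex_point_ext hvp.
by apply: (cell_boundary_of_incident hN); rewrite /= size_cat; lia.
Qed.

(* Which ends of a descendant of a cell are ends of the cell depends only on the
   word and the loop type, by [word_tags]. *)
Lemma cell_boundary_transport (a c : edge RS) z :
  (is_loop a <-> is_loop c) ->
  cell_boundary a (proj (ext a z)) -> cell_boundary c (proj (ext c z)).
Proof.
move=> hL.
have tr k := incident_ends_cat_transport (mkseq z k) hL.
have key (ua uc : V) :
    (forall k, incident ua (ends (ecat a (mkseq z k))) ->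
               incident uc (ends (ecat c (mkseq z k)))) ->
    vertex_point ua (proj (ext a z)) -> vertex_point uc (proj (ext c z)).
  move=> hinc /vertex_point_ext [N hN].
  exists (ext c z); split => //; exists (size c.2 + N) => k hk.
  have -> : k = size c.2 + (k - size c.2) by lia.
  rewrite prefix_ext; apply: hinc; rewrite -prefix_ext; apply: hN; lia.
case=> h; [left | right]; apply: (key _ _ _ h) => k; [exact: (proj1 (tr k)) | exact: (proj2 (tr k))].
Qed.

Lemma cell_interior_same_size (a b : edge RS) x :
  size a.2 = size b.2 -> a <> b -> ~ (cell_interior a x /\ cell_interior b x).
Proof.
move=> hs hne [[[z hz] hnb] [[z' hz'] _]].
apply: hnb; rewrite hz; apply: (@glued_disagree_boundary a b z z' (size a.2)) => //.
  by rewrite -hz -hz'.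
move/prefix_agree; rewrite {2}hs !prefix_ext_size; exact: hne.
Qed.

Lemma cell_interior_cat (a : edge RS) t x :
  cell_interior (ecat a t) x -> cell_interior a x.
Proof.
move=> [[z hz] hnb]; split; first by exists (scat t z); rewrite hz ext_ecat.
by move=> hb; apply: hnb; rewrite hz; apply: cell_boundary_cat; rewrite -hz.
Qed.

Lemma rinit_neq_rterm : ri <> rt.
Proof. by case: expandingRS. Qed.

Lemma exists_interior_vertex : exists r : VR, r <> ri /\ r <> rt.
Proof.
apply: NNPP => hn.
have hsub : [set: VR] \subset [set ri; rt].
  apply/subsetP => r _; rewrite !inE.
  case: (r =P ri) => // h1; case: (r =P rt) => // h2.
  by case: hn; exists r.
have := subset_leq_card hsub; rewrite cardsT cards2.
by case: expandingRS => _ _ _ h3 _; move: h3; case: (ri != rt) => /=; lia.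
Qed.

Lemma exists_edge_at (r : VR) : exists z : ER, gsrc z = r \/ gtgt z = r.
Proof. by case: expandingRS => [[_ h]] _ _ _ _; apply: h. Qed.

Lemma tag_step_init_fresh (t : end_tag * end_tag) (x : VR) :
  x <> rt -> t.1 = TFresh -> tag_step t x = TFresh.
Proof. by rewrite /tag_step => h1 h2; case: eqP => // _; case: eqP. Qed.

Lemma tag_step_term_fresh (t : end_tag * end_tag) (x : VR) :
  x <> ri -> t.2 = TFresh -> tag_step t x = TFresh.
Proof. by rewrite /tag_step => h1 h2; case: eqP => // _; case: eqP. Qed.

Lemma tag_step_interior (t : end_tag * end_tag) (x : VR) :
  x <> ri -> x <> rt -> tag_step t x = TFresh.
Proof. by rewrite /tag_step => h1 h2; case: eqP => // _; case: eqP. Qed.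

(* Go down an edge z1 at an interior vertex of R: one of its ends is fresh; then go
   down an edge at the end of R carrying the other, non-fresh, tag. *)
Lemma fresh_word : exists tau, size tau = 2 /\ word_tags tau = (TFresh, TFresh).
Proof.
have [r [hr1 hr2]] := exists_interior_vertex.
have [z1 hz1] := exists_edge_at r.
have [za hza] := exists_edge_at ri.
have [zb hzb] := exists_edge_at rt.
have nri := rinit_neq_rterm.
set t1 := (tag_step (TInit, TTerm) (gsrc z1), tag_step (TInit, TTerm) (gtgt z1)).
case: (classic (t1.2 = TFresh)) => h2.
  exists [:: z1; zb]; split => //; rewrite /word_tags /= -/t1.
  have nz := no_edge_init_term zb.
  have a1 : gsrc zb <> ri by move=> E; case: hzb => E'; [congruence | tauto].
  have a2 : gtgt zb <> ri by move=> E; case: hzb => E'; [tauto | congruence].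
  by rewrite !tag_step_term_fresh.
have h1 : t1.1 = TFresh.
  case: hz1 => E; first by rewrite /t1 /= E tag_step_interior.
  by case: h2; rewrite /t1 /= E tag_step_interior.
exists [:: z1; za]; split => //; rewrite /word_tags /= -/t1.
have nz := no_edge_init_term za.
have a1 : gsrc za <> rt by move=> E; case: hza => E'; [congruence | tauto].
have a2 : gtgt za <> rt by move=> E; case: hza => E'; [tauto | congruence].
by rewrite !tag_step_init_fresh.
Qed.

Definition depth (P : seq (edge RS)) : nat := \max_(p <- P) size p.2.

Lemma size_le_depth (P : seq (edge RS)) p : p \in P -> size p.2 <= depth P.
Proof. by move=> hp; apply: (@leq_bigmax_seq _ _ xpredT (fun p : edge RS => size p.2)). Qed.

Lemma prefix_eq_le (v w : Omega RS) j k :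
  j <= k -> pfx v k = pfx w k -> pfx v j = pfx w j.
Proof.
move=> hjk; rewrite /Defs.prefix => -[E1 E2].
by rewrite E1 -(take_mkseq v.2 hjk) -(take_mkseq w.2 hjk) E2.
Qed.

(* The cell of [ecat (pfx w n) tau] with tau a fresh word and n = depth P meets
   only interiors of cells of P, hence lies in a cell of P, which is then a prefix
   of w. *)
Lemma partition_prefix (P : seq (edge RS)) : cellular_partition P ->
  forall w : Omega RS, exists2 p, p \in P & pfx w (size p.2) = p.
Proof.
case=> _ hcov _ w; set n := depth P.
have [tau [hsz htg]] := fresh_word.
set e := pfx w n; set v := ext (ecat e tau) w.2.
have hse : size e.2 = n by rewrite size_prefix.
have [q hq [z' hz']] := hcov (proj v).
exists q => //.
have [u [hu1 hu2]] := share_incident (proj_eq_glued hz' (n + 2)).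
have hu : incident u (ends (ecat e tau)).
  by move: hu1; rewrite -(prefix_ext_size (ecat e tau) w.2) /= size_cat hse hsz.
have hlu : n < vtx_level u.
  have [s1 s2] := tag_sem_ends_cat e tau; rewrite htg /= hse in s1 s2.
  by case: hu => ->.
have /prefix_agree hqv := incident_common_agree hu2 hu1 hlu.
have hvw : pfx v n = pfx w n by rewrite /v ext_ecat -{1}hse prefix_ext_size.
rewrite -[in RHS](prefix_ext_size q z').
by apply: (prefix_eq_le (size_le_depth hq)); rewrite -hvw hqv.
Qed.

Lemma partition_prefix_edge (P : seq (edge RS)) (e : edge RS) :
  cellular_partition P -> depth P <= size e.2 ->
  exists2 p, p \in P & exists t, e = ecat p t.
Proof.
move=> hP hd; have [z0 _] := exists_edge_at ri.
have [p hp Ep] := partition_prefix hP (ext e (fun=> z0)).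
have hle : size p.2 <= size e.2 by apply: leq_trans (size_le_depth hp) hd.
set k := size p.2 in Ep hle *.
have Ep' : p = (e.1, take k e.2) by rewrite -Ep prefix_ext_le.
exists p => //; exists (drop k e.2).
by rewrite Ep' /ecat /= cat_take_drop -surjective_pairing.
Qed.

Definition base_edges : seq (edge RS) := [seq (e0, [::]) | e0 <- enum E0].

Lemma base_edges_partition : cellular_partition base_edges.
Proof.
split.
- by rewrite map_inj_uniq ?enum_uniq // => a b [].
- move=> x; have [w ->] := proj_surj x.
  exists (w.1, [::]); first by apply: map_f; rewrite mem_enum.
  by exists w.2; rewrite ext_nil.
- by move=> e e' /mapP [a _ ->] /mapP [b _ ->] hne x; apply: cell_interior_same_size.
Qed.

Definition words (K : nat) : seq (seq ER) := [seq val t | t <- enum {: K.-tuple ER}].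

Lemma size_words K t : t \in words K -> size t = K.
Proof. by case/mapP => tt _ ->; rewrite size_tuple. Qed.

Lemma mkseq_words z K : mkseq z K \in words K.
Proof.
apply/mapP; have hs : size (mkseq z K) == K by rewrite size_mkseq.
by exists (Tuple hs); rewrite ?mem_enum.
Qed.

Definition refine (P : seq (edge RS)) (K : nat) : seq (edge RS) :=
  undup [seq ecat e t | e <- P, t <- words K].

Lemma mem_refine (P : seq (edge RS)) K e :
  e \in refine P K -> exists2 a, a \in P & exists2 t, size t = K & e = ecat a t.
Proof.
rewrite mem_undup => /allpairsP [[a t] [ha ht ->]].
by exists a => //; exists t => //; apply: size_words.
Qed.

Lemma refine_partition (P : seq (edge RS)) K :
  cellular_partition P -> cellular_partition (refine P K).
Proof.
case=> _ covP disP; split; first exact: undup_uniq.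
  move=> x; have [e he [z hz]] := covP x.
  exists (ecat e (mkseq z K)); first by rewrite mem_undup; apply: allpairs_f => //; apply: mkseq_words.
  by exists (fun i => z (i + K)); rewrite -ext_split.
move=> e1 e2 /mem_refine [a ha [t1 ht1 ->]] /mem_refine [b hb [t2 ht2 ->]] hne x [h1 h2].
case: (classic (a = b)) => [Eab|nab].
  subst b; apply: (cell_interior_same_size _ hne (conj h1 h2)).
  by rewrite /= !size_cat ht1 ht2.
by apply: (disP a b ha hb nab x); split; apply: cell_interior_cat; [apply: h1 | apply: h2].
Qed.

Definition canonical_on (f : X RS -> X RS) (e e' : edge RS) : Prop :=
  (is_loop e <-> is_loop e') /\ forall zeta, f (proj (ext e zeta)) = proj (ext e' zeta).

Lemma canonical_on_id (e : edge RS) : canonical_on id e e.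
Proof. by []. Qed.

Lemma canonical_on_cat f (a a' : edge RS) t :
  canonical_on f a a' -> canonical_on f (ecat a t) (ecat a' t).
Proof.
case=> hL hf; split; first exact: is_loop_cat_transport.
by move=> zeta; rewrite !ext_ecat hf.
Qed.

Lemma canonical_on_comp f g (a b c : edge RS) :
  canonical_on g a b -> canonical_on f b c -> canonical_on (f \o g) a c.
Proof. by case=> hab hg [hbc hf]; split; [tauto | move=> zeta /=; rewrite hg hf]. Qed.

Lemma canonical_on_inv f g (a b : edge RS) :
  canonical_on f a b -> cancel f g -> canonical_on g b a.
Proof. by case=> hL hf fK; split; [tauto | move=> zeta; rewrite -hf fK]. Qed.

Lemma canonical_on_interior f g (a b : edge RS) y :
  canonical_on f a b -> cancel f g -> cell_interior b y -> cell_interior a (g y).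
Proof.
case=> hL hf fK [[z ->] hnb]; rewrite -hf fK; split; first by exists z.
by move/(cell_boundary_transport hL).
Qed.

Lemma homeomorphism_id : homeomorphism_X (@id (X RS)).
Proof. by exists id; split => // U. Qed.

Lemma homeomorphism_comp (f g : X RS -> X RS) :
  homeomorphism_X f -> homeomorphism_X g -> homeomorphism_X (f \o g).
Proof.
case=> f' [fK f'K cf cf'] [g' [gK g'K cg cg']].
exists (g' \o f'); split; [exact: can_comp | exact: can_comp | |].
- by move=> U /cf /cg.
- by move=> U /cg' /cf'.
Qed.

Lemma homeomorphism_inv (f g : X RS -> X RS) :
  homeomorphism_X f -> cancel f g -> cancel g f -> homeomorphism_X g.
Proof.
case=> h [fK hK cf ch] fg gf.
have -> : g = h by apply: functional_extensionality => y; rewrite -{1}(hK y) fg.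
by exists f.
Qed.

Lemma rearrangement_id : rearrangement (@id (X RS)).
Proof.
split; first exact: homeomorphism_id.
by exists base_edges; split; [exact: base_edges_partition | move=> e _; exists e; apply: canonical_on_id].
Qed.

(* Refine the partition of g so deeply that g maps each of its cells into a cell
   of the partition of f. *)
Lemma rearrangement_comp (f g : X RS -> X RS) :
  rearrangement f -> rearrangement g -> rearrangement (f \o g).
Proof.
move=> [homf [Pf [hPf cf]]] [homg [Pg [hPg cg]]].
split; first exact: homeomorphism_comp.
exists (refine Pg (depth Pf)); split; first exact: refine_partition.
move=> e /mem_refine [a ha [t ht ->]].
have [a' ga] := cg a ha.
have [|p hp [rho Ep]] := @partition_prefix_edge Pf (ecat a' t) hPf.
  by rewrite /= size_cat ht leq_addl.
have [p' fp] := cf p hp.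
exists (ecat p' rho); apply: canonical_on_comp (canonical_on_cat t ga) _.
by rewrite Ep; apply: canonical_on_cat.
Qed.

Lemma rearrangement_inv (f g : X RS -> X RS) :
  rearrangement f -> cancel f g -> cancel g f -> rearrangement g.
Proof.
move=> [homf [P [[_ covP disP] cf]]] fg gf.
split; first exact: homeomorphism_inv homf fg gf.
have /fin_all_exists [F hF] (x : seq_sub P) : exists e', canonical_on f (ssval x) e'.
  exact: cf _ (ssvalP x).
exists (undup [seq F x | x : seq_sub P]); split; first split.
- exact: undup_uniq.
- move=> y; have [e he [z hz]] := covP (g y).
  exists (F (SeqSub he)); first by rewrite mem_undup; apply: map_f; rewrite mem_enum.
  by exists z; have [_ <-] := hF (SeqSub he); rewrite /= -hz gf.
- move=> e e'; rewrite !mem_undup => /mapP [x _ ->] /mapP [x' _ ->] hne y [h1 h2].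
  apply: (disP _ _ (ssvalP x) (ssvalP x')).
    by move=> E; apply: hne; congr F; apply: val_inj.
  by split; apply: canonical_on_interior fg _; [apply: hF | apply: h1 | apply: hF | apply: h2].
- move=> e; rewrite mem_undup => /mapP [x _ ->].
  by exists (ssval x); apply: canonical_on_inv (hF x) fg.
Qed.

End Rearrangements.

Theorem proposition1p15 (RS : repl_sys) :
  expanding RS ->
  [/\ rearrangement (@id (X RS)),
      (forall f g : X RS -> X RS,
         rearrangement f -> rearrangement g -> rearrangement (f \o g)) &
      (forall f g : X RS -> X RS,
         rearrangement f -> cancel f g -> cancel g f -> rearrangement g)].
Proof.
move=> HE; split.
- exact: rearrangement_id.
- exact: rearrangement_comp.
- exact: rearrangement_inv.
Qed.
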